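(* Let $\beta>1$ be a real number. If every $x\in I_\beta\cap\mathbb{Q}(\beta)$ has an eventually periodic $(-\beta)$-expansion $d_{-\beta}(x)$, then $\beta$ is either a Pisot number or a Salem number.
   Context: For $\beta>1$ put $l_\beta=-\frac{\beta}{\beta+1}$, $r_\beta=\frac{1}{\beta+1}$ and $I_\beta=[l_\beta,r_\beta)$. Define $T:I_\beta\to I_\beta$ by $T(x)=-\beta x-\lfloor -\beta x-l_\beta\rfloor$. The $(-\beta)$-expansion of $x\in I_\beta$ is the infinite word $d_{-\beta}(x)=x_1x_2x_3\cdots$ with $x_i=\lfloor -\beta T^{i-1}(x)-l_\beta\rfloor$ for $i\ge1$; then $x=\sum_{i\ge1}x_i(-\beta)^{-i}$. $\mathbb{Q}(\beta)$ denotes the smallest subfield of $\mathbb{C}$ containing $\beta$. A Pisot number is an algebraic integer $\beta>1$ all of whose other conjugates have modulus $<1$; a Salem number is an algebraic integer $\beta>1$ all of whose other conjugates have modulus $\le1$ and which is not a Pisot number. *)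

From HB Require Import structures.
From mathcomp Require Import all_boot all_order all_algebra.
From mathcomp Require Import complex.
From mathcomp Require Import reals.
Set Implicit Arguments. Unset Strict Implicit. Unset Printing Implicit Defensive.
Import Order.TTheory GRing.Theory Num.Theory.
Local Open Scope ring_scope.

Section NegBeta.
Variable R : realType.

Definition lbeta (beta : R) : R := - (beta / (beta + 1)).
Definition rbeta (beta : R) : R := 1 / (beta + 1).

Definition Tneg (beta x : R) : R :=
  - beta * x - (Num.floor (- beta * x - lbeta beta))%:~R.

(* i-th digit (i >= 1) of d_{-beta}(x): x_i = floor(-beta T^{i-1}(x) - l_beta);
   we index from 0: negdigit beta x i = x_{i+1}. *)
Definition negdigit (beta x : R) (i : nat) : int :=
  Num.floor (- beta * (iter i (Tneg beta) x) - lbeta beta).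

Definition eventually_periodic (d : nat -> int) : Prop :=
  exists N p : nat, (0 < p)%N /\ forall i, (N <= i)%N -> d (i + p)%N = d i.

(* x belongs to Q(beta) (the smallest subfield containing beta; as beta is real,
   it is the set of values P(beta)/Q(beta) of rational functions over Q) *)
Definition in_Qbeta (beta x : R) : Prop :=
  exists P Q : {poly rat}, (map_poly ratr Q).[beta] != 0 /\
    x = (map_poly ratr P).[beta] / (map_poly ratr Q).[beta].

Definition algebraic_integer (beta : R) : Prop :=
  exists p : {poly int}, p \is monic /\ root (map_poly intr p) beta.

(* z is a (complex) conjugate of beta: a root of the minimal polynomial of beta
   over Q, i.e. of an irreducible rational polynomial vanishing at beta. *)
Definition conjugate (beta : R) (z : complex R) : Prop :=
  exists q : {poly rat}, irreducible_poly q /\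
    root (map_poly ratr q) beta /\ root (map_poly ratr q) z.

Definition Pisot (beta : R) : Prop :=
  algebraic_integer beta /\ 1 < beta /\
  forall z : complex R, conjugate beta z -> z != (beta%:C)%C -> `|z| < 1.

Definition Salem (beta : R) : Prop :=
  [/\ algebraic_integer beta, 1 < beta,
      (forall z : complex R, conjugate beta z -> z != (beta%:C)%C -> `|z| <= 1)
    & ~ Pisot beta].

End NegBeta.

From HB Require Import structures.
From mathcomp Require Import all_boot all_order all_algebra.
From mathcomp Require Import complex.
From mathcomp Require Import reals.
From mathcomp Require Import ring lra.
From Stdlib Require Import Classical.

Set Implicit Arguments.
Unset Strict Implicit.
Unset Printing Implicit Defensive.

Import Order.TTheory GRing.Theory Num.Theory.
Local Open Scope ring_scope.

(* Since [T y = - beta y - d], the scaled orbit [K T^n(x)] of [x = A(beta) / K],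
   for an integer polynomial [A], is [Z_n(beta)] where [Z_0 = A] and
   [Z_(n+1) = - X Z_n - K d_n] are integer polynomials.  Digits determine the
   point, so periodic digits give [T^(N+p) x = T^N x] and [beta] is a root of
   [Z_(N+p) - Z_N]; for [A = 1] this polynomial is monic up to sign, so [beta]
   is an algebraic integer.  A conjugate [z] of [beta] is a root of it as well,
   hence [w_n = Z_n(z)] satisfies [w_(N+p) = w_N].  But
   [|w_(n+1) + z w_n| = K |d_n| <= K (beta + 1)], so if [|z| > 1] and [|A(z)|]
   is large enough, [|w_n|] is strictly increasing. *)

Lemma irreducible_root_transfer (F L : numFieldType) (a : F) (b : L)
    (q G : {poly rat}) :
  irreducible_poly q -> root (map_poly ratr q) a -> root (map_poly ratr q) b ->
  root (map_poly ratr G) a -> root (map_poly ratr G) b.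
Proof.
move=> [_ irr_q] qa qb Ga.
have gcd_a : root (map_poly (ratr : rat -> F) (gcdp q G)) a.
  by rewrite gcdp_map root_gcd qa Ga.
have gcd_nonconst : size (gcdp q G) != 1%N.
  apply: contraTneq gcd_a => /eqP.
  rewrite -(size_map_poly (ratr : {rmorphism rat -> F})) => /size_poly1P [c c0 ->].
  by rewrite rootC.
have /dvdpP [h ->] : q %| G.
  by rewrite -(eqp_dvdl _ (irr_q _ gcd_nonconst (dvdp_gcdl q G))) dvdp_gcdr.
by rewrite rmorphM rootM qb orbT.
Qed.

Lemma map_poly_ratr_intr (S : unitRingType) (G : {poly int}) :
  map_poly (ratr : rat -> S) (map_poly intr G) = map_poly intr G.
Proof.
rewrite -map_poly_comp_id0; last by rewrite (ratr_int S 0).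
by apply: eq_map_poly => z /=; rewrite ratr_int.
Qed.

Lemma increasing_of_expanding (R : realDomainType) (r B : R) (a : nat -> R) :
  1 < r -> (forall n, r * a n <= a n.+1 + B) -> B < (r - 1) * a 0%N ->
  {homo a : m n / (m < n)%N >-> m < n}.
Proof.
move=> r1 expand a0.
have step n : B < (r - 1) * a n -> a n < a n.+1.
  by move=> hn; have := expand n; lra.
have inv n : B < (r - 1) * a n.
  elim: n => // n IH; have := step n IH.
  have : 0 < r - 1 by lra.
  nra.
apply: homo_ltn => [y x z|n]; [exact: lt_trans | exact: step].
Qed.

Lemma bernoulli_ineq (R : realDomainType) (b : R) (k : nat) :
  0 <= b -> 1 + k%:R * b <= (1 + b) ^+ k.
Proof.
move=> b0; elim: k => [|k IH]; first by rewrite mul0r addr0 expr0.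
rewrite exprS -natr1.
have : 0 <= b * ((1 + b) ^+ k - (1 + k%:R * b)) by apply: mulr_ge0; lra.
have : 0 <= k%:R * (b * b) :> R by apply: mulr_ge0 => //; apply: mulr_ge0.
nra.
Qed.

Fixpoint orbit_poly (A : {poly int}) (K : int) (d : nat -> int) (n : nat) :
    {poly int} :=
  if n is n'.+1 then - 'X * orbit_poly A K d n' - (K * d n')%:P else A.

Lemma horner_orbit_polyS (S : comNzRingType) (t : S) A K d n :
  (map_poly intr (orbit_poly A K d n.+1)).[t] =
  - t * (map_poly intr (orbit_poly A K d n)).[t] - (K * d n)%:~R.
Proof. by rewrite /= rmorphB rmorphM rmorphN /= map_polyX map_polyC !hornerE. Qed.

Lemma size_orbit_poly1_sub K d n :
  (size (orbit_poly 1 K d n - (- 'X) ^+ n)%R <= n)%N.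
Proof.
elim: n => [|n IH]; first by rewrite /= expr0 subrr size_poly0.
have -> : orbit_poly 1 K d n.+1 - (- 'X) ^+ n.+1 =
    - 'X * (orbit_poly 1 K d n - (- 'X) ^+ n) - (K * d n)%:P.
  by rewrite /= exprS; ring.
apply: leq_trans (size_add _ _) _; rewrite size_opp geq_max.
rewrite (leq_trans (size_polyC_leq1 _)) // andbT.
by apply: leq_trans (size_mul_leq _ _) _; rewrite size_opp size_polyX.
Qed.

Lemma size_orbit_poly1 K d n : (size (orbit_poly 1 K d n) <= n.+1)%N.
Proof.
rewrite -[orbit_poly _ _ _ _](subrK ((- 'X) ^+ n)).
apply: leq_trans (size_add _ _) _; rewrite geq_max.
rewrite (leq_trans (size_orbit_poly1_sub K d n)) //.
by apply: leq_trans (size_exp_leq _ _) _; rewrite size_opp size_polyX mul1n.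
Qed.

Lemma orbit_poly1_monic K d N p : (0 < p)%N ->
  ((-1) ^+ (N + p))%:P * (orbit_poly 1 K d (N + p) - orbit_poly 1 K d N) \is monic.
Proof.
move=> p_gt0; set n := (N + p)%N; set Z := orbit_poly 1 K d.
have sign_Xn : ((-1) ^+ n)%:P * (- 'X) ^+ n = 'X^n :> {poly int}.
  rewrite [(- 'X) ^+ n]exprNn mulrA polyC_exp polyCN polyC1 -exprMn mulrNN.
  by rewrite mulr1 expr1n mul1r.
have -> : ((-1) ^+ n)%:P * (Z n - Z N) =
    'X^n + ((-1) ^+ n)%:P * (Z n - (- 'X) ^+ n - Z N).
  by rewrite -sign_Xn; ring.
rewrite monicE lead_coefDl ?lead_coefXn // size_polyXn ltnS size_Cmul ?signr_eq0 //.
apply: leq_trans (size_add _ _) _; rewrite size_opp geq_max size_orbit_poly1_sub /=.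
by apply: leq_trans (size_orbit_poly1 K d N) _; rewrite -addn1 leq_add2l.
Qed.

Section NegBetaTransformation.
Variables (R : realType) (beta : R).
Hypothesis beta_gt1 : 1 < beta.

Lemma rbetaE : rbeta beta = lbeta beta + 1.
Proof. have hb := beta_gt1; rewrite /rbeta /lbeta; field; rewrite lt0r_neq0 //; lra. Qed.

Lemma lbeta_gtN1 : -1 < lbeta beta.
Proof. by have hb := beta_gt1; rewrite /lbeta ltrN2 ltr_pdivrMr; lra. Qed.

Lemma lbeta_lt0 : lbeta beta < 0.
Proof. by have hb := beta_gt1; rewrite /lbeta oppr_lt0 divr_gt0 //; lra. Qed.

Lemma Tneg_range y : lbeta beta <= Tneg beta y < rbeta beta.
Proof.
rewrite rbetaE /Tneg; set w := - beta * y - lbeta beta.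
have := floor_le w; have := floorD1_gt w; rewrite intrD /w.
move=> h1 h2; apply/andP; split; lra.
Qed.

Lemma iter_Tneg_range x n : lbeta beta <= x < rbeta beta ->
  lbeta beta <= iter n (Tneg beta) x < rbeta beta.
Proof. by case: n => [|n] //= _; exact: Tneg_range. Qed.

Lemma iter_TnegS x n : iter n.+1 (Tneg beta) x =
  - beta * iter n (Tneg beta) x - (negdigit beta x n)%:~R.
Proof. by []. Qed.

Lemma negdigit_bound x n : lbeta beta <= x < rbeta beta ->
  `|(negdigit beta x n)%:~R| <= beta + 1.
Proof.
move=> x_in; have hb := beta_gt1.
have := iter_Tneg_range n x_in; have := iter_Tneg_range n.+1 x_in.
rewrite iter_TnegS rbetaE; have := lbeta_gtN1; have := lbeta_lt0.
set y := iter n _ x; set d := (negdigit beta x n)%:~R.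
move=> l0 l1 /andP[h1 h2] /andP[h3 h4].
have : 0 <= beta * (1 - y) by apply: mulr_ge0; lra.
have : 0 <= beta * (1 + y) by apply: mulr_ge0; lra.
rewrite ler_norml; move=> p1 p2; apply/andP; split; lra.
Qed.

Lemma iter_Tneg_sub u v : negdigit beta u =1 negdigit beta v ->
  forall k, iter k (Tneg beta) u - iter k (Tneg beta) v = (- beta) ^+ k * (u - v).
Proof.
move=> eq_d; elim=> [|k IH]; first by rewrite expr0 mul1r.
by rewrite !iter_TnegS eq_d exprS -mulrA -IH; ring.
Qed.

(* Iterates of [Tneg] lie in an interval of length 1, while equal digits make
   their distance grow like [beta ^ k]. *)
Lemma negdigit_inj u v : negdigit beta u =1 negdigit beta v -> u = v.
Proof.
move=> eq_d; have hb := beta_gt1.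
apply/eqP; rewrite -subr_eq0; apply: contraT => uv_neq0.
have e_gt0 : 0 < `|u - v| by rewrite normr_gt0.
set e := `|u - v| in e_gt0 *.
have eb_gt0 : 0 < e * (beta - 1) by apply: mulr_gt0 => //; lra.
set k := Num.bound (e * (beta - 1))^-1.
have k_large : 1 < k%:R * (e * (beta - 1)).
  by rewrite -ltr_pdivrMr // div1r archi_boundP // invr_ge0 ltW.
have : `|iter k.+1 (Tneg beta) u - iter k.+1 (Tneg beta) v| < 1.
  have /andP[h1 h2] := Tneg_range (iter k (Tneg beta) u).
  have /andP[h3 h4] := Tneg_range (iter k (Tneg beta) v).
  rewrite rbetaE in h2 h4; rewrite !iterS ltr_norml; apply/andP; split; lra.
rewrite iter_Tneg_sub // normrM normrX normrN (gtr0_norm (lt_trans ltr01 hb)) -/e.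
have b1 : 0 <= beta - 1 by lra.
have := ler_wpM2r (ltW e_gt0) (bernoulli_ineq k.+1 b1).
rewrite [1 + (beta - 1)]addrC subrK -natr1; nra.
Qed.

Lemma eventually_periodic_orbit x : eventually_periodic (negdigit beta x) ->
  exists N p : nat, (0 < p)%N /\ iter (N + p) (Tneg beta) x = iter N (Tneg beta) x.
Proof.
move=> [N [p [p_gt0 per]]]; exists N, p; split => //.
apply: negdigit_inj => k; rewrite /negdigit -!iterD.
by have := per (k + N)%N (leq_addl _ _); rewrite /negdigit -addnA.
Qed.

Lemma horner_orbit_poly_negdigit (A : {poly int}) (K : int) x n :
  (map_poly intr A).[beta] = K%:~R * x ->
  (map_poly intr (orbit_poly A K (negdigit beta x) n)).[beta] =
    K%:~R * iter n (Tneg beta) x.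
Proof.
move=> A_beta; elim: n => [//|n IH].
by rewrite horner_orbit_polyS IH iter_TnegS intrM; ring.
Qed.

Lemma periodic_orbit_poly_root (A : {poly int}) (K : int) x :
  (map_poly intr A).[beta] = K%:~R * x -> eventually_periodic (negdigit beta x) ->
  exists N p : nat, (0 < p)%N /\ root (map_poly intr
    (orbit_poly A K (negdigit beta x) (N + p) - orbit_poly A K (negdigit beta x) N)) beta.
Proof.
move=> A_beta /eventually_periodic_orbit [N [p [p_gt0 per]]].
exists N, p; split => //.
by rewrite /root rmorphB hornerD hornerN !horner_orbit_poly_negdigit // per subrr.
Qed.

End NegBetaTransformation.

Section ComplexNorm.
Local Open Scope complex_scope.
Variable R : rcfType.
Local Notation normc := (@Normc.normc R).

Lemma normc_ge0 (z : R[i]) : 0 <= normc z.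
Proof. by case: z => a b; rewrite sqrtr_ge0. Qed.

Lemma normC_normc (z : R[i]) : `|z| = (normc z)%:C.
Proof. by case: z. Qed.

Lemma normc_real (r : R) : normc r%:C = `|r|.
Proof. by rewrite /Normc.normc /= expr0n /= addr0 sqrtr_sqr. Qed.

Lemma normc_gt0 (z : R[i]) : z != 0 -> 0 < normc z.
Proof.
move=> z0; rewrite lt_def normc_ge0 andbT.
by apply: contra z0 => /eqP/Normc.eq0_normc ->.
Qed.

Lemma normc_scale_subC (a b c : R) (z : R[i]) : 0 <= a ->
  a * normc (z - b%:C) - `|a * b - c| <= normc (a%:C * z - c%:C).
Proof.
move=> a0; rewrite distrC -[a in a * _]ger0_norm // -!normc_real -Normc.normcM.
rewrite lerBlDr (le_trans _ (le_normcD _ _)) // rmorphB rmorphM /=.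
by rewrite addrA subrK mulrBr.
Qed.

End ComplexNorm.

Definition periodic_on_Qbeta (R : realType) (beta : R) : Prop :=
  forall x : R, lbeta beta <= x -> x < rbeta beta -> in_Qbeta beta x ->
    eventually_periodic (negdigit beta x).

Section PeriodicRoots.
Variables (R : realType) (beta : R).
Hypotheses (beta_gt1 : 1 < beta) (beta_periodic : periodic_on_Qbeta beta).

Lemma in_Qbeta_div_nat (A : {poly int}) (K : nat) : (0 < K)%N ->
  in_Qbeta beta ((map_poly intr A).[beta] / K%:R).
Proof.
move=> K_gt0; exists (map_poly intr A), K%:R%:P.
by rewrite map_poly_ratr_intr map_polyC /= hornerC ratr_nat pnatr_eq0 -lt0n.
Qed.

Lemma periodic_on_Qbeta_root (A : {poly int}) (K : nat) x : (0 < K)%N ->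
  (map_poly intr A).[beta] = K%:R * x -> lbeta beta <= x < rbeta beta ->
  exists N p : nat, (0 < p)%N /\ root (map_poly intr
    (orbit_poly A K (negdigit beta x) (N + p) - orbit_poly A K (negdigit beta x) N)) beta.
Proof.
move=> K_gt0 A_beta /andP[x_ge x_lt].
have x_eq : x = (map_poly intr A).[beta] / K%:R.
  by rewrite A_beta mulrAC divff ?mul1r // pnatr_eq0 -lt0n.
apply: periodic_orbit_poly_root => //.
by apply: beta_periodic => //; rewrite x_eq; exact: in_Qbeta_div_nat.
Qed.

Lemma algebraic_integer_of_periodic : algebraic_integer beta.
Proof.
have hb := beta_gt1; have hb1 : 0 <= beta + 1 by lra.
have K_large := archi_boundP hb1; set K := Num.bound _ in K_large.
have K_gt0 : 0 < K%:R :> R by lra.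
have one_beta : (map_poly intr 1).[beta] = K%:R * K%:R^-1 :> R.
  by rewrite rmorph1 hornerC divff // gt_eqF.
have Kinv_in : lbeta beta <= K%:R^-1 < rbeta beta.
  have Kinv_gt0 : 0 < K%:R^-1 :> R by rewrite invr_gt0.
  have := lbeta_lt0 hb; rewrite /rbeta div1r ltf_pV2 ?posrE //; last by lra.
  by move=> l_lt0; apply/andP; split; lra.
have [|N [p [p_gt0]]] := periodic_on_Qbeta_root _ one_beta Kinv_in.
  by rewrite -(ltr0n R).
set d := negdigit beta _ => root_beta.
exists (((-1) ^+ (N + p))%:P * (orbit_poly 1 K d (N + p) - orbit_poly 1 K d N)).
split; first exact: orbit_poly1_monic.
by rewrite rmorphM rootM root_beta orbT.
Qed.

End PeriodicRoots.

Section Conjugates.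
Local Open Scope complex_scope.
Variables (R : realType) (beta : R).
Hypotheses (beta_gt1 : 1 < beta) (beta_periodic : periodic_on_Qbeta beta).
Local Notation normc := (@Normc.normc R).

Lemma normc_orbit_poly_increasing (A : {poly int}) (K : nat) x (z : R[i]) :
  lbeta beta <= x < rbeta beta -> 1 < normc z ->
  K%:R * (beta + 1) < (normc z - 1) * normc (map_poly intr A).[z] ->
  {homo (fun n => normc (map_poly intr (orbit_poly A K (negdigit beta x) n)).[z]) :
    m n / (m < n)%N >-> m < n}.
Proof.
move=> x_in z_gt1 seed; apply: increasing_of_expanding z_gt1 _ seed => n /=.
rewrite -Normc.normcM horner_orbit_polyS.
move: (map_poly _ _).[z] => w; set c : R := (K%:Z * negdigit beta x n)%:~R.
rewrite -(rmorph_int (real_complex R)) -/c.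
have -> : z * w = - (- z * w - c%:C) - c%:C by ring.
rewrite (le_trans (le_normcD _ _)) // !normcN lerD2l normc_real /c intrM normrM.
by rewrite normr_nat ler_wpM2l // negdigit_bound.
Qed.

(* The seed is [x = m {K beta} / K]: [K] large makes [|K z - floor (K beta)|]
   close to [K |z - beta|], [m] large makes [|A(z)|] beat [K (beta + 1)], and
   [m (beta + 1) < K] keeps [x] below [rbeta beta]. *)
Lemma conjugate_seed (z : R[i]) : 1 < normc z -> z != beta%:C ->
  exists (K : nat) (A : {poly int}) (x : R),
    [/\ (0 < K)%N, (map_poly intr A).[beta] = K%:R * x, lbeta beta <= x < rbeta beta
       & K%:R * (beta + 1) < (normc z - 1) * normc (map_poly intr A).[z]].
Proof.
move=> z_gt1 z_neq; have hb := beta_gt1; have lb := lbeta_lt0 hb.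
set nz := normc z in z_gt1 *; set delta := normc (z - beta%:C).
have delta_gt0 : 0 < delta by apply: normc_gt0; rewrite subr_eq0.
have nz1_delta_gt0 : 0 < (nz - 1) * delta by apply: mulr_gt0 => //; lra.
have [m m_large] : exists m : nat, 2 * (beta + 1) < (nz - 1) * delta * m%:R.
  exists (Num.bound (2 * (beta + 1) / ((nz - 1) * delta))).
  by rewrite [_ * _%:R]mulrC -ltr_pdivrMr // archi_boundP // divr_ge0 ?ltW //; lra.
have hm : 0 <= m%:R * (beta + 1) by apply: mulr_ge0 => //; lra.
have [K [K_delta K_m]] : exists K : nat, 2 < K%:R * delta /\ m%:R * (beta + 1) < K%:R.
  have hd : 0 <= 2 / delta by rewrite divr_ge0 // ltW.
  move: (archi_boundP (addr_ge0 hd hm)); move: (Num.bound _) => K K_large.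
  by exists K; rewrite -ltr_pdivrMr //; split; lra.
have K_gt0 : 0 < K%:R :> R by lra.
set f := Num.floor (K%:R * beta); set v := K%:R * beta - f%:~R.
have v_ge0 : 0 <= v by rewrite subr_ge0 floor_le.
have v_lt1 : v < 1 by have := floorD1_gt (K%:R * beta); rewrite intrD -/f /v; lra.
set A : {poly int} := (m%:Z)%:P * ((K%:Z)%:P * 'X - f%:P).
have horner_A (S : comNzRingType) (t : S) :
    (map_poly intr A).[t] = m%:R * (K%:R * t - f%:~R).
  by rewrite rmorphM rmorphB rmorphM /= !map_polyC map_polyX /= !hornerE.
exists K, A, (m%:R * v / K%:R); split.
- by rewrite -(ltr0n R).
- by rewrite horner_A /v; field; rewrite gt_eqF.
- apply/andP; split.
    by apply: le_trans (ltW lb) _; rewrite !mulr_ge0 // invr_ge0 ltW.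
  rewrite /rbeta ltr_pdivrMr // mulrAC ltr_pdivlMr; last by lra.
  have : 0 <= (1 - v) * (m%:R * (beta + 1)) by apply: mulr_ge0 => //; lra.
  lra.
have lower : K%:R * delta - v <= normc (K%:R * z - f%:~R).
  have := normc_scale_subC beta (f%:~R) z (ler0n R K).
  by rewrite rmorph_nat rmorph_int ger0_norm.
rewrite horner_A Normc.normcM.
have -> : normc (m%:R : R[i]) = m%:R.
  by rewrite -(rmorph_nat (real_complex R)) normc_real normr_nat.
have : 0 <= (nz - 1) * m%:R * (K%:R * delta - 2) by rewrite !mulr_ge0 //; lra.
have : 0 < K%:R * ((nz - 1) * delta * m%:R - 2 * (beta + 1)) by rewrite mulr_gt0 //; lra.
have : 0 <= (nz - 1) * m%:R by rewrite mulr_ge0 //; lra.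
nra.
Qed.

Lemma conjugate_norm_le1 (z : R[i]) :
  conjugate beta z -> z != beta%:C -> `|z| <= 1.
Proof.
move=> [q [q_irr [q_beta q_z]]] z_neq.
rewrite normC_normc lecR leNgt; apply/negP => z_gt1.
have [K [A [x [K_gt0 A_beta x_in seed]]]] := conjugate_seed z_gt1 z_neq.
have [N [p [p_gt0]]] := periodic_on_Qbeta_root beta_gt1 beta_periodic K_gt0 A_beta x_in.
set G := _ - _ => root_beta.
have root_z : root (map_poly intr G) z.
  rewrite -map_poly_ratr_intr; apply: irreducible_root_transfer q_irr q_beta q_z _.
  by rewrite map_poly_ratr_intr.
move: root_z; rewrite /root rmorphB hornerD hornerN subr_eq0 => /eqP orbit_z.
have N_lt : (N < N + p)%N by rewrite -{1}[N]addn0 ltn_add2l.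
by have := normc_orbit_poly_increasing x_in z_gt1 seed N_lt; rewrite /= orbit_z ltxx.
Qed.

End Conjugates.

Theorem theorem3 (R : realType) (beta : R) (hbeta : 1 < beta) :
  (forall x : R, lbeta beta <= x -> x < rbeta beta -> in_Qbeta beta x ->
     eventually_periodic (negdigit beta x)) ->
  Pisot beta \/ Salem beta.
Proof.
move=> beta_periodic.
have beta_algint := algebraic_integer_of_periodic hbeta beta_periodic.
have [beta_Pisot | not_Pisot] := classic (Pisot beta); first by left.
by right; split => // z; exact: conjugate_norm_le1.
Qed.
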